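(* Let $\Gamma$ be an abelian group of order $2n+1\geq 3$. There exists a $\mathrm{M}^0_{\Gamma^*}(2,n;n,2)$ if and only if $\Gamma\notin\{\mathbb Z_3,\mathbb Z_5,\mathbb Z_3\oplus\mathbb Z_3\}$.
   Context: For an abelian group $\Gamma$ and $\Omega\subseteq\Gamma$, a zero-sum magic partially filled array $\mathrm{M}^0_\Omega(m,n;s,k)$ is an $m\times n$ array, some cells of which may be empty, with entries in $\Omega$ in which every element of $\Omega$ appears exactly once, each row has exactly $s$ and each column exactly $k$ filled cells, and all row and column sums equal $0_\Gamma$. In particular $\mathrm{M}^0_\Omega(2,n;n,2)$ is a $2\times n$ array with no empty cells. $\Gamma^*=\Gamma\setminus\{0_\Gamma\}$; $\mathbb Z_N$ is the cyclic group of order $N$. *)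

From HB Require Import structures.
From mathcomp Require Import all_boot all_order all_algebra.
Set Implicit Arguments. Unset Strict Implicit. Unset Printing Implicit Defensive.
Import GRing.Theory.
Local Open Scope ring_scope.

(* A partially filled m x n array with entries in G: [None] = empty cell. *)
Definition zs_magic_pfa (G : finZmodType) (Omega : {set G}) (m n s k : nat)
    (A : 'M[option G]_(m, n)) : Prop :=
  (forall i j x, A i j = Some x -> x \in Omega) /\
      (forall x, x \in Omega ->
         #|[set p : 'I_m * 'I_n | A p.1 p.2 == Some x]| = 1%N) /\
      (forall i, #|[set j | A i j != None]| = s) /\
      (forall j, #|[set i | A i j != None]| = k) /\
      (forall i, \sum_(j < n) odflt 0 (A i j) = 0) /\
    (forall j, \sum_(i < m) odflt 0 (A i j) = 0).

Definition zmod_iso (G : finZmodType) (H : zmodType) : Prop :=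
  exists f : G -> H, bijective f /\ {morph f : x y / x + y}.

Arguments zs_magic_pfa G Omega m n s k A : clear implicits.

From HB Require Import structures.
From mathcomp Require Import all_boot all_fingroup all_solvable all_algebra.
From mathcomp Require Import zify.
Set Implicit Arguments. Unset Strict Implicit. Unset Printing Implicit Defensive.
Import GRing.Theory FinRing.Theory.

(* A 2 x n array as in the statement has second row the negation of its first
   row, so it amounts to a zero-sum half set S of G: a set containing exactly
   one of x and -x for every x <> 0, with sum 0.  For Z_3, Z_5 and Z_3 x Z_3 a
   direct check shows that there is none.  Otherwise let g have maximal order
   m, the exponent of G.  If a subgroup H with m dividing |H| has a zero-sum
   half set T, then T together with one coset out of each pair x + H, -x + H
   is a zero-sum half set of G, because every coset sums to |H| x + sum H = 0.
   For m >= 7, a subset-sum argument chooses signs with sum_j (+-j) = 0 mod m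
   for 1 <= j <= (m-1)/2, giving a zero-sum half set of <g>.  For m = 3 or 5,
   G is elementary abelian and, not being excluded, contains Z_3^3 or Z_5^2,
   where explicit zero-sum half sets are checked by computation. *)

Local Open Scope ring_scope.

(* MathComp does not provide the finZmodType structure of a product. *)
HB.instance Definition _ (U V : finZmodType) := GRing.Zmodule.on (U * V)%type.

Lemma sum_ord2 (V : zmodType) (F : 'I_2 -> V) : \sum_(i < 2) F i = F ord0 + F ord_max.
Proof. by rewrite !big_ord_recl big_ord0 addr0; congr (_ + F _); apply: val_inj. Qed.

Lemma ord2P (i : 'I_2) : i = ord0 \/ i = ord_max.
Proof. by case: i => [[|[|m]] lti]; [left|right|]; try apply: val_inj. Qed.

Section HalfSets.
Variable G : finZmodType.
Implicit Types (H S : {set G}) (x y : G).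

Definition half_set_in H S :=
  [/\ S \subset H, 0 \notin S & {in H, forall x, x != 0 -> (x \in S) = (- x \notin S)}].

Definition half_set S := half_set_in [set: G] S.

Definition has_zero_sum_half_set := exists S, half_set S /\ \sum_(x in S) x = 0.

Lemma card_sym_union S : 0 \notin S -> {in S, forall x, - x \notin S} ->
  #|0 |: (S :|: [set - x | x in S])| = (#|S| * 2).+1.
Proof.
move=> S0 SN; rewrite cardsU1 cardsU card_imset; last exact: oppr_inj.
have -> : S :&: [set - x | x in S] = set0.
  apply/setP => x; rewrite !inE; apply/andP => -[xS /imsetP [y yS xy]].
  by move: (SN y yS); rewrite -xy xS.
have -> : (0 : G) \in S :|: [set - x | x in S] = false.
  apply/negbTE; rewrite inE negb_or S0; apply/imsetP => -[y yS /eqP].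
  by rewrite eq_sym oppr_eq0 => /eqP y0; move: S0; rewrite -y0 yS.
by rewrite cards0 subn0 muln2 addnn.
Qed.

Lemma half_set_inE H S : half_set_in H S -> 0 \in H -> {in H, forall x, - x \in H} ->
  H = 0 |: (S :|: [set - x | x in S]).
Proof.
move=> [SH S0 HS] H0 HN; apply/setP => x; rewrite !inE.
apply/idP/idP => [xH|].
  case: eqP => //= /eqP x0; rewrite HS // -implybE; apply/implyP => nxS.
  by apply/imsetP; exists (- x); rewrite ?opprK.
case/or3P => [/eqP -> //|/(subsetP SH) //|/imsetP [y /(subsetP SH) yH ->]].
exact: HN.
Qed.

Lemma card_half_set S : half_set S -> #|G| = (#|S| * 2).+1.
Proof.
move=> hS; have [_ S0 HS] := hS; rewrite -cardsT (half_set_inE hS) ?inE //.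
rewrite card_sym_union // => x xS; rewrite -HS ?inE //.
by apply: contraTneq xS => ->.
Qed.

Lemma half_set_in_of_card H S : 0 \in H -> {in H, forall x, - x \in H} ->
  S \subset H -> 0 \notin S -> {in S, forall x, - x \notin S} ->
  #|H| = (#|S| * 2).+1 -> half_set_in H S.
Proof.
move=> H0 HN SH S0 SN cH; split=> // x xH x0.
have sub : 0 |: (S :|: [set - x | x in S]) \subset H.
  rewrite subUset sub1set H0 subUset SH /=.
  by apply/subsetP => _ /imsetP [y /(subsetP SH) yH ->]; exact: HN.
have := subset_cardP _ sub; rewrite card_sym_union // -cH => /(_ erefl) /(_ x).
rewrite xH !inE (negbTE x0) /= => /orP [xS|/imsetP [y yS ->]].
  by rewrite xS SN.
by rewrite opprK yS (negbTE (SN y yS)).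
Qed.

Lemma half_set_of_magic_array n (A : 'M[option G]_(2, n)) :
  zs_magic_pfa G [set x | x != 0] 2 n n 2 A -> has_zero_sum_half_set.
Proof.
move=> [Aom [Auniq [Arow [_ [Arsum Acsum]]]]].
pose v i j := odflt 0 (A i j).
have Av i j : A i j = Some (v i j).
  have /subset_cardP/(_ (subsetT _))/(_ j) : #|[set j | A i j != None]| = #|[set: 'I_n]|.
    by rewrite Arow cardsT card_ord.
  by rewrite !inE /v; case: (A i j).
have v0 i j : v i j != 0 by have := Aom i j _ (Av i j); rewrite inE.
have v_inj i j i' j' : v i j = v i' j' -> (i, j) = (i', j').
  move=> e; have := Auniq (v i j); rewrite inE v0 => /(_ isT) /eqP/cards1P [p hp].
  have : (i, j) \in [set p | A p.1 p.2 == Some (v i j)] by rewrite inE Av.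
  have : (i', j') \in [set p | A p.1 p.2 == Some (v i j)] by rewrite inE Av e.
  by rewrite hp !inE => /eqP -> /eqP ->.
have v1 j : v ord_max j = - v ord0 j.
  by apply/eqP; rewrite -addr_eq0 addrC -(sum_ord2 (v^~ j)); apply/eqP/Acsum.
exists [set v ord0 j | j : 'I_n]; split; first split.
- exact: subsetT.
- by apply/imsetP => -[j _ /esym/eqP]; rewrite (negbTE (v0 _ _)).
- move=> x _ x0; have := Auniq x; rewrite inE x0 => /(_ isT) /eqP/cards1P [[i j] hp].
  have : (i, j) \in [set p | A p.1 p.2 == Some x] by rewrite hp inE.
  rewrite inE Av /= => /eqP [<-] {x x0 hp}.
  have not_row0 j' i'' : v ord0 j' = v ord_max i'' -> False.
    by move/v_inj => -[/eqP].
  case: (ord2P i) => ->.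
  + rewrite imset_f //; apply/esym/negP => /imsetP [j' _].
    by rewrite -v1 => /esym/not_row0.
  + rewrite v1 opprK imset_f //; apply/negbTE/negP => /imsetP [j' _].
    by rewrite -v1 => /esym/not_row0.
- rewrite big_imset /=; last by move=> j j' _ _ /v_inj [].
  exact: Arsum.
Qed.

Lemma magic_array_of_half_set S : half_set S -> \sum_(x in S) x = 0 ->
  exists A : 'M[option G]_(2, #|S|), zs_magic_pfa G [set x | x != 0] 2 #|S| #|S| 2 A.
Proof.
move=> [_ S0 HS] sumS.
pose e (j : 'I_#|S|) := enum_val j.
have eS j : e j \in S by apply: enum_valP.
have e0 j : e j != 0 by apply: contraNneq S0 => <-.
have sum_e : \sum_(j < #|S|) e j = 0 by move: sumS; rewrite (big_enum_val (fun x : G => x)).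
pose A := \matrix_(i < 2, j < #|S|) Some (if i == ord0 then e j else - e j).
have Arow0 j : A ord0 j = Some (e j) by rewrite mxE.
have Arow1 j : A ord_max j = Some (- e j) by rewrite mxE.
have [full_row full_col] :
    (forall i, [set j | A i j != None] = setT) /\ (forall j, [set i | A i j != None] = setT).
  by split=> ? ; apply/setP => ?; rewrite !inE mxE.
exists A; split; [|split; [|split; [|split; [|split]]]].
- by move=> i j x; rewrite mxE inE => -[<-]; case: ifP; rewrite ?oppr_eq0 e0.
- move=> x; rewrite inE => x0; apply/eqP/cards1P.
  have [xS|nxS] := boolP (x \in S).
  + exists (ord0, enum_rank_in xS x); apply/setP => -[i j]; rewrite !inE /=.
    case: (ord2P i) => ->; rewrite ?Arow0 ?Arow1 xpair_eqE /=.
      by rewrite -(inj_eq enum_val_inj) enum_rankK_in // (inj_eq Some_inj).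
    apply/negbTE/eqP => -[ex]; move: (HS x (in_setT x) x0).
    by rewrite xS -ex opprK eS.
  + have Snx : - x \in S by move: (HS x (in_setT x) x0); rewrite (negbTE nxS) => /esym/negbFE.
    exists (ord_max, enum_rank_in Snx (- x)); apply/setP => -[i j]; rewrite !inE /=.
    case: (ord2P i) => ->; rewrite ?Arow0 ?Arow1 xpair_eqE /=.
      by apply/negbTE/eqP => -[ex]; move: nxS; rewrite -ex eS.
    rewrite -(inj_eq enum_val_inj) enum_rankK_in // (inj_eq Some_inj).
    by rewrite -(inj_eq oppr_inj) opprK.
- by move=> i; rewrite full_row cardsT card_ord.
- by move=> j; rewrite full_col cardsT card_ord.
- move=> i; case: (ord2P i) => ->.
    by under eq_bigr do rewrite Arow0.
  by under eq_bigr do rewrite Arow1; rewrite sumrN sum_e oppr0.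
- by move=> j; rewrite sum_ord2 Arow0 Arow1 subrr.
Qed.

End HalfSets.

Lemma double_mulrn_half (V : zmodType) (x : V) m : odd m -> x *+ m = 0 ->
  (x *+ 2) *+ (m.+1)./2 = x.
Proof.
move=> om xm; have e : ((m.+1)./2).*2 = m.+1 by rewrite -[RHS]odd_double_half /= om.
by rewrite -mulrnA mul2n e mulrSr xm add0r.
Qed.

Section Extension.
Variables (G : finZmodType) (H : {set G}).
Hypotheses (H_0 : 0 \in H) (H_sub : {in H &, forall x y, x - y \in H}).
Hypotheses (oddH : odd #|H|) (expH : forall x : G, x *+ #|H| = 0).

Lemma memHN x : x \in H -> - x \in H.
Proof. by move=> xH; rewrite -sub0r H_sub. Qed.

Lemma memHD x y : x \in H -> y \in H -> x + y \in H.
Proof. by move=> xH yH; rewrite -[y]opprK H_sub ?memHN. Qed.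

Lemma memHMn x n : x \in H -> x *+ n \in H.
Proof. by move=> xH; elim: n => [|n IH]; rewrite ?mulr0n // mulrS memHD. Qed.

Lemma memH_double x : x *+ 2 \in H -> x \in H.
Proof. by move=> x2H; rewrite -(double_mulrn_half oddH (expH x)) memHMn. Qed.

Lemma sum_subgroup : \sum_(h in H) h = 0.
Proof.
have sumN : \sum_(h in H) h = - \sum_(h in H) h.
  rewrite -sumrN (reindex_inj oppr_inj) /=.
  by apply: eq_bigl => h; apply/idP/idP => /memHN; rewrite ?opprK.
by rewrite -(double_mulrn_half oddH (expH (\sum_(h in H) h))) mulr2n {2}sumN subrr mul0rn.
Qed.

Definition addcoset x := [set y | y - x \in H].

(* One coset out of each pair x + H, -x + H outside H: the one of smaller rank
   in the enumeration of {set G}. *)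
Definition coset_half_set :=
  [set x | (x \notin H) && (enum_rank (addcoset x) < enum_rank (addcoset (- x)))%N].

Lemma addcoset_eq x y : x - y \in H -> addcoset x = addcoset y.
Proof.
move=> xyH; apply/setP => z; rewrite !inE.
have -> : z - y = (z - x) + (x - y) by rewrite addrA subrK.
apply/idP/idP => [zxH|]; first exact: memHD.
by move/H_sub/(_ xyH); rewrite addrK.
Qed.

Lemma addcoset_opp_neq x : x \notin H -> addcoset x != addcoset (- x).
Proof.
apply: contraNneq => e; apply: memH_double.
have : x \in addcoset (- x) by rewrite -e inE subrr.
by rewrite inE opprK mulr2n.
Qed.

Lemma coset_half_set_shift x y : x - y \in H -> (x \in coset_half_set) = (y \in coset_half_set).
Proof.
move=> xyH; rewrite !inE (addcoset_eq xyH) (@addcoset_eq (- x) (- y)).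
  congr (~~ _ && _); apply/idP/idP => [xH|yH].
    by rewrite -(subKr x y) H_sub.
  by rewrite -[x](subrK y) memHD.
by rewrite -opprD memHN.
Qed.

Lemma coset_half_setP x : x \notin H ->
  (x \in coset_half_set) = (- x \notin coset_half_set).
Proof.
move=> xH; have nxH : - x \notin H by apply: contra xH => /memHN; rewrite opprK.
rewrite !inE xH nxH opprK /= -leqNgt ltn_neqAle.
by rewrite (inj_eq val_inj) (inj_eq enum_rank_inj) addcoset_opp_neq.
Qed.

Lemma sum_coset_half_set : \sum_(x in coset_half_set) x = 0.
Proof.
rewrite (partition_big_imset addcoset) /=; apply: big1 => _ /imsetP [y Yy ->].
rewrite (eq_bigl (fun x => x - y \in H)) => [|x]; last first.
  apply/andP/idP => [[_ /eqP /setP /(_ x)]|xyH]; first by rewrite !inE subrr H_0.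
  by rewrite (addcoset_eq xyH) (coset_half_set_shift xyH).
rewrite (reindex_inj (addIr y)) /=.
under eq_bigl do rewrite addrK.
by rewrite big_split /= sum_subgroup sumr_const expH add0r.
Qed.

Lemma extend_zero_sum_half_set T : half_set_in H T -> \sum_(x in T) x = 0 ->
  has_zero_sum_half_set G.
Proof.
move=> [TH T0 HT] sumT; pose Y := coset_half_set.
have YH x : x \in Y -> x \notin H by rewrite inE => /andP [].
have TH' x : x \in T -> x \in H by move/(subsetP TH).
exists (T :|: Y); split; first split.
- exact: subsetT.
- by rewrite inE negb_or T0; apply: contraTN H_0 => /YH.
- move=> x _ x0; have [xH|xH] := boolP (x \in H).
    have nxH := memHN xH.
    rewrite !in_setU (negbTE (contraTN (@YH x) xH)) (negbTE (contraTN (@YH _) nxH)).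
    by rewrite !orbF HT.
  have nxH : - x \notin H by apply: contra xH => /memHN; rewrite opprK.
  rewrite !in_setU (negbTE (contra (@TH' x) xH)) (negbTE (contra (@TH' _) nxH)).
  exact: coset_half_setP.
- have dTY : [disjoint T & Y]
    by apply/pred0P => x /=; apply/negbTE/andP => -[/TH' xH /YH]; rewrite xH.
  rewrite (eq_bigl [predU T & Y]) => [|x]; last by rewrite !in_setU.
  by rewrite bigU //= sumT sum_coset_half_set addr0.
Qed.

End Extension.

Lemma morphD_nmod_morphism (U V : zmodType) (f : U -> V) :
  {morph f : x y / x + y} -> nmod_morphism f.
Proof. by move=> fD; split=> //; apply: (@addrI _ (f 0)); rewrite -fD !addr0. Qed.

Section AdditiveImage.
Variables (K G : finZmodType) (f : K -> G).
Hypotheses (f_inj : injective f) (fD : {morph f : x y / x + y}).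
HB.instance Definition _ := GRing.isNmodMorphism.Build K G f (morphD_nmod_morphism fD).
Implicit Types H T : {set K}.

Lemma half_set_in_imset H T : half_set_in H T -> half_set_in (f @: H) (f @: T).
Proof.
move=> [TH T0 HT]; split; first exact: imsetS.
  by rewrite -(raddf0 f) mem_imset.
move=> _ /imsetP [x xH ->]; rewrite -raddfN !mem_imset // raddf_eq0 //.
exact: HT.
Qed.

Lemma sum_imset T : \sum_(y in f @: T) y = f (\sum_(x in T) x).
Proof. by rewrite raddf_sum big_imset //= => x y _ _ /f_inj. Qed.

Lemma embedding_zero_sum_half_set : (forall x : G, x *+ #|K| = 0) ->
  has_zero_sum_half_set K -> has_zero_sum_half_set G.
Proof.
move=> expK [T [hT sumT]].
have cardH : #|f @: [set: K]| = #|K| by rewrite card_imset // cardsT.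
apply: (@extend_zero_sum_half_set G (f @: [set: K]) _ _ _ _ (f @: T)).
- by rewrite -(raddf0 f) imset_f ?inE.
- by move=> _ _ /imsetP [x _ ->] /imsetP [y _ ->]; rewrite -raddfB imset_f ?inE.
- by rewrite cardH (card_half_set hT) /= muln2 odd_double.
- by move=> x; rewrite cardH.
- exact: half_set_in_imset.
- by rewrite sum_imset sumT raddf0.
Qed.

End AdditiveImage.

Lemma iso_zero_sum_half_set (G K : finZmodType) :
  zmod_iso G K -> has_zero_sum_half_set G -> has_zero_sum_half_set K.
Proof.
move=> [f [f_bij fD]] [S [hS sumS]]; have f_inj := bij_inj f_bij.
have imT : f @: [set: G] = [set: K].
  apply/setP => y; rewrite inE; case: f_bij => g _ gK.
  by rewrite -[y]gK imset_f ?inE.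
exists (f @: S); rewrite /half_set -imT (sum_imset f_inj fD) sumS.
by rewrite (morphD_nmod_morphism fD).1; split=> //; exact: half_set_in_imset.
Qed.

Lemma card3_no_zero_sum_half_set (G : finZmodType) :
  #|G| = 3%N -> ~ has_zero_sum_half_set G.
Proof.
move=> cG [S [hS sumS]]; have /cards1P [x Sx] : #|S| == 1%N.
  by have := card_half_set hS; rewrite cG => /eqP; lia.
have [_ S0 _] := hS.
by move: sumS S0; rewrite Sx big_set1 => ->; rewrite set11.
Qed.

Lemma card5_no_zero_sum_half_set (G : finZmodType) :
  #|G| = 5%N -> ~ has_zero_sum_half_set G.
Proof.
move=> cG [S [hS sumS]]; have /cards2P [x [y [xy Sxy]]] : #|S| == 2%N.
  by have := card_half_set hS; rewrite cG => /eqP; lia.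
have [_ S0 HS] := hS.
move/eqP: sumS; rewrite Sxy big_setU1 ?inE // big_set1 addr_eq0 => /eqP yx.
have x0 : x != 0 by apply: contraNneq S0 => <-; rewrite Sxy !inE eqxx.
by have := HS x (in_setT x) x0; rewrite Sxy yx opprK !inE !eqxx orbT.
Qed.

Lemma sum_half_set_reps (G : finZmodType) (S R : {set G}) : half_set S -> half_set R ->
  \sum_(x in S) x = \sum_(y in R) (if y \in S then y else - y).
Proof.
move=> [_ S0 HS] [_ R0 HR]; pose fS y := if y \in S then y else - y.
have nz (A : {set G}) y : 0 \notin A -> y \in A -> y != 0 by move=> A0; apply: contraTneq => ->.
have fS_inj : {in R &, injective fS}.
  move=> y y' yR y'R; rewrite /fS.
  case yS: (y \in S); case y'S: (y' \in S) => // e.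
  - by move: (HR y' (in_setT _) (nz _ _ R0 y'R)); rewrite y'R -e yR.
  - by move: (HR y (in_setT _) (nz _ _ R0 yR)); rewrite yR e y'R.
  - exact: oppr_inj.
rewrite -(big_imset id fS_inj); apply: eq_bigl => x; apply/idP/imsetP.
- move=> xS; have [xR|xR] := boolP (x \in R); first by exists x; rewrite // /fS xS.
  have x0 := nz _ _ S0 xS.
  exists (- x); first by have := HR x (in_setT x) x0; rewrite (negbTE xR) => /esym/negbFE.
  have nxS : - x \notin S by rewrite -HS ?inE.
  by rewrite /fS (negbTE nxS) opprK.
- move=> [y yR ->]; rewrite /fS; case: ifP => // /negbT.
  by rewrite HS ?inE ?(nz _ _ R0 yR) // negbK.
Qed.

Lemma half_set_seq (G : finZmodType) (s : seq G) : 0 \notin s ->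
  (forall x, x != 0 -> (x \in s) = (- x \notin s)) -> half_set [set x in s].
Proof. by move=> s0 hs; split; rewrite ?subsetT ?inE // => x _; rewrite !inE; apply: hs. Qed.

Lemma sum_set_seq (G : finZmodType) (s : seq G) (F : G -> G) : uniq s ->
  \sum_(x in [set x in s]) F x = \sum_(x <- s) F x.
Proof. by move=> us; rewrite big_uniq //; apply: eq_bigl => x; rewrite inE. Qed.

Lemma Z3xZ3_no_zero_sum_half_set : ~ has_zero_sum_half_set ('Z_3 * 'Z_3)%type.
Proof.
pose r : seq ('Z_3 * 'Z_3) := [:: (1, 0); (0, 1); (1, 1); (1, 2)].
have hr : half_set [set x in r].
  by apply: half_set_seq => // -[[[|[|[|?]]] ?] [[|[|[|?]]] ?]]; vm_compute.
move=> [S [hS /eqP]]; apply/negP.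
rewrite (sum_half_set_reps hS hr) sum_set_seq // !big_cons big_nil.
by do 4 case: (_ \in S); vm_compute.
Qed.

Section SubsetSums.
Local Close Scope ring_scope.

Lemma subset_sum_iota k t : (t <= \sum_(i < k) i.+1) ->
  exists b : nat -> bool, (\sum_(i < k) b i.+1 * i.+1) = t.
Proof.
elim: k t => [|k IH] t.
  by rewrite big_ord0 leqn0 => /eqP ->; exists (fun _ => false); rewrite big_ord0.
rewrite big_ord_recr /=; set s := (\sum_(i < k) i.+1) => ht.
have ks : (k <= s) by rewrite -[X in (X <= _)]card_ord -sum1_card leq_sum.
have [b hb] : exists b : nat -> bool,
    (\sum_(i < k) b i.+1 * i.+1 = t - k.+1 * (s < t)).
  by apply: IH; rewrite -/s; case: (ltnP s t) => /= ?; lia.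
exists (fun j => if j == k.+1 then (s < t) else b j).
rewrite big_ord_recr /= eqxx (eq_bigr (fun i : 'I_k => b i.+1 * i.+1)) => [|i _].
  by rewrite hb; case: (ltnP s t) => /= ?; lia.
by rewrite eqSS ltn_eqF.
Qed.

Lemma double_le_sum_iota k : (2 < k) -> (2 * k <= \sum_(i < k) i.+1).
Proof.
elim: k => // k IH; rewrite ltnS leq_eqVlt big_ord_recr /= => /orP [/eqP <-|k2].
  by rewrite !big_ord_recr big_ord0.
by rewrite mulnS addnC leq_add ?IH //; lia.
Qed.

End SubsetSums.

Section Cyclic.
Variables (G : finZmodType) (g : G) (k : nat).
Hypothesis ord_g : #[g]%g = (2 * k + 1)%N.

Lemma order_mulrn_eq_mod a c : (g *+ a == g *+ c) = (a == c %[mod 2 * k + 1]).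
Proof. by rewrite -!zmodXgE eq_expg_mod_order ord_g. Qed.

Lemma order_mulrn_inj i j : (i <= k)%N -> (j <= k)%N -> g *+ i = g *+ j -> i = j.
Proof. by move=> ik jk /eqP; rewrite order_mulrn_eq_mod !modn_small; [move/eqP | lia ..]. Qed.

Lemma order_mulrn_neq_opp i j : (0 < i <= k)%N -> (0 < j <= k)%N -> g *+ i != - (g *+ j).
Proof.
move=> hi hj; rewrite -addr_eq0 -mulrnDr -(mulr0n g) order_mulrn_eq_mod mod0n.
by rewrite modn_small; lia.
Qed.

Variable b : nat -> bool.

Definition signed_mulrn j := if b j then - (g *+ j) else g *+ j.

Definition signed_half := [set signed_mulrn i.+1 | i : 'I_k].

Lemma signed_mulrn_inj i j : (0 < i <= k)%N -> (0 < j <= k)%N ->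
  signed_mulrn i = signed_mulrn j -> i = j.
Proof.
move=> hi hj; have ik : (i <= k)%N by lia. have jk : (j <= k)%N by lia.
rewrite /signed_mulrn; case: (b i); case: (b j) => e.
- exact: order_mulrn_inj ik jk (oppr_inj e).
- by move: (order_mulrn_neq_opp hj hi); rewrite -e eqxx.
- by move: (order_mulrn_neq_opp hi hj); rewrite e eqxx.
- exact: order_mulrn_inj ik jk e.
Qed.

Lemma signed_mulrn_neq_opp i j : (0 < i <= k)%N -> (0 < j <= k)%N ->
  signed_mulrn i != - signed_mulrn j.
Proof.
move=> hi hj; have ik : (i <= k)%N by lia. have jk : (j <= k)%N by lia.
have neq_b : g *+ i = g *+ j -> b i = b j by move/(order_mulrn_inj ik jk) ->.
rewrite /signed_mulrn; case bi: (b i); case bj: (b j); rewrite ?opprK.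
- by rewrite eq_sym order_mulrn_neq_opp.
- by apply/eqP => /oppr_inj /neq_b; rewrite bi bj.
- by apply/eqP => /neq_b; rewrite bi bj.
- exact: order_mulrn_neq_opp.
Qed.

Lemma signed_mulrn_neq0 i : (0 < i <= k)%N -> signed_mulrn i != 0.
Proof.
move=> hi; rewrite /signed_mulrn.
by case: (b i); rewrite ?oppr_eq0 -(mulr0n g) order_mulrn_eq_mod mod0n modn_small; lia.
Qed.

Lemma signed_half_inj : injective (fun i : 'I_k => signed_mulrn i.+1).
Proof. by move=> i j /signed_mulrn_inj e; apply/val_inj/succn_inj/e; rewrite /= ltn_ord. Qed.

Lemma card_signed_half : #|signed_half| = k.
Proof. by rewrite card_imset ?card_ord //; apply: signed_half_inj. Qed.

Lemma half_set_in_signed_half : half_set_in <[g]>%g signed_half.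
Proof.
have range (i : 'I_k) : (0 < i.+1 <= k)%N by rewrite /= ltn_ord.
apply: half_set_in_of_card.
- exact: group1.
- by move=> x xg; rewrite -zmodVgE groupV.
- apply/subsetP => _ /imsetP [i _ ->]; rewrite /signed_mulrn.
  by case: (b _); rewrite ?(-zmodVgE) ?groupV -zmodXgE mem_cycle.
- by apply/imsetP => -[i _ /esym/eqP]; apply/negP/signed_mulrn_neq0/range.
- move=> _ /imsetP [i _ ->]; apply/imsetP => -[j _ /eqP].
  by rewrite eq_sym (negbTE (signed_mulrn_neq_opp (range j) (range i))).
- by rewrite card_signed_half -[#|_|]/#[g]%g ord_g; lia.
Qed.

Lemma sum_signed_half : \sum_(x in signed_half) x =
  g *+ (\sum_(i < k) i.+1)%N - g *+ (\sum_(i < k) b i.+1 * i.+1)%N *+ 2.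
Proof.
rewrite big_imset /=; last exact: in2W signed_half_inj.
rewrite -!sumrMnr -sumrMnl -sumrB; apply: eq_bigr => i _; rewrite /signed_mulrn.
case: (b _); rewrite ?mul1n ?mul0n ?mulr0n ?mul0rn ?subr0 //.
by rewrite mulr2n opprD addrA subrr add0r.
Qed.

End Cyclic.

Lemma cyclic_zero_sum_half_set (G : finZmodType) (g : G) k :
  #[g]%g = (2 * k + 1)%N -> (2 < k)%N ->
  exists T, half_set_in <[g]>%g T /\ \sum_(x in T) x = 0.
Proof.
move=> ord_g k2; have s_ge := double_le_sum_iota k2.
(* Flip the signs of indices summing to t with 2 t = s mod 2k + 1, where s is
   the sum of 1..k; as 2 (k + 1) = 1 mod 2k + 1, t = s (k + 1) mod 2k + 1 works. *)
have [|b hb] := @subset_sum_iota k (((\sum_(i < k) i.+1) * k.+1) %% (2 * k + 1))%N.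
  by apply: leq_trans s_ge; rewrite -ltnS -[(2 * k).+1]addn1 ltn_pmod // addn1.
exists (signed_half g k b); split; first exact: half_set_in_signed_half.
rewrite sum_signed_half //; apply/eqP; rewrite subr_eq0 -mulrnA (order_mulrn_eq_mod ord_g).
set s := (\sum_(i < k) i.+1)%N.
rewrite hb modnMml (_ : (s * k.+1 * 2 = s * (2 * k + 1) + s)%N) ?modnMDl //.
by clearbody s; nia.
Qed.

Lemma mulrn_modn (V : zmodType) (x : V) m n : x *+ n = 0 -> x *+ (m %% n)%N = x *+ m.
Proof. by move=> xn; rewrite {2}(divn_eq m n) mulrnDr mulnC mulrnA xn mul0rn add0r. Qed.

Lemma mulrn_coprime_inv (V : zmodType) (x : V) i n : x *+ n = 0 -> (0 < i)%N ->
  coprime i n -> exists j, x *+ i *+ j = x.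
Proof.
move=> xn i0 /eqP co; case: (egcdnP n i0) => km kn e _; exists km.
by rewrite -mulrnA mulnC e co mulrnDr -(mulrn_modn (kn * n) xn) modnMl mulr0n add0r.
Qed.

Lemma zmod_iso_of_bij (G K : finZmodType) (f : K -> G) :
  bijective f -> {morph f : x y / x + y} -> zmod_iso G K.
Proof.
move=> [g fK gK] fD; exists g; split; first by exists f.
by move=> x y; apply: (can_inj fK); rewrite fD !gK.
Qed.

Section PrimeExponent.
Variables (p : nat) (G : finZmodType).
Hypotheses (p_pr : prime p.+1) (expG : forall x : G, x *+ p.+1 = 0).

Lemma mulrn_ord_morph (g : G) : {morph (fun i : 'I_p.+1 => g *+ i) : i j / i + j}.
Proof. by move=> i j /=; rewrite mulrn_modn // mulrnDr. Qed.

Lemma mulrn_ord_inj (g : G) : g != 0 -> injective (fun i : 'I_p.+1 => g *+ i).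
Proof.
move=> g0; have g_ord : #[g]%g = p.+1.
  apply/prime_nt_dvdP => //; first by rewrite order_eq1.
  by rewrite order_dvdn zmodXgE expG.
by move=> i j /eqP; rewrite -!zmodXgE eq_expg_mod_order g_ord !modn_small // => /eqP/val_inj.
Qed.

Section Embedding.
Variables (K : finZmodType) (f : K -> G).
Hypotheses (f_inj : injective f) (fD : {morph f : x y / x + y}).
HB.instance Definition _ := GRing.isNmodMorphism.Build K G f (morphD_nmod_morphism fD).

Section NewGenerator.
Variable c : G.
Hypothesis c_out : forall u, f u != c.

Definition adjoin_generator (w : 'I_p.+1 * K) := c *+ w.1 + f w.2.

Lemma adjoin_generator_morph : {morph adjoin_generator : v w / v + w}.
Proof.
by move=> [i u] [j v]; rewrite /adjoin_generator /= mulrn_modn // mulrnDr raddfD addrACA.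
Qed.

HB.instance Definition _ := GRing.isNmodMorphism.Build _ G adjoin_generator
  (morphD_nmod_morphism adjoin_generator_morph).

Lemma adjoin_generator_inj : injective adjoin_generator.
Proof.
apply: raddf_inj => [[i u]]; rewrite /adjoin_generator /= => /eqP; rewrite addr_eq0 => /eqP ciu.
have i0 : i = 0.
  apply/val_inj/eqP; rewrite /= -leqn0 leqNgt; apply/negP => i_gt0.
  have i_co : coprime i p.+1.
    rewrite coprime_sym prime_coprime //.
    by apply/negP => /(dvdn_leq i_gt0); rewrite leqNgt ltn_ord.
  have [j ij] := mulrn_coprime_inv (expG c) i_gt0 i_co.
  by move: (c_out ((- u) *+ j)); rewrite raddfMn raddfN -ciu ij eqxx.
by move: ciu; rewrite i0 mulr0n => /esym/eqP; rewrite oppr_eq0 raddf_eq0 // => /eqP /= ->.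
Qed.

End NewGenerator.

Lemma embedding_iso_or_extend : zmod_iso G K \/
  exists F : 'I_p.+1 * K -> G, injective F /\ {morph F : v w / v + w}.
Proof.
have [cardKG|cardKG] := eqVneq #|K| #|G|.
  by left; apply: (zmod_iso_of_bij _ fD); apply: inj_card_bij f_inj _; rewrite cardKG.
right; have ltKG : (#|K| < #|G|)%N by rewrite ltn_neqAle cardKG (leq_card _ f_inj).
have /subsetPn [c _ c_out] : ~~ ([set: G] \subset f @: [set: K]).
  by apply: contraTN ltKG => /subset_leq_card; rewrite cardsT card_imset // cardsT -leqNgt.
exists (adjoin_generator c); split; last exact: adjoin_generator_morph.
by apply: adjoin_generator_inj => u; apply: contraNneq c_out => <-; rewrite imset_f.
Qed.

End Embedding.
End PrimeExponent.

Lemma Z3_cube_zero_sum_half_set : has_zero_sum_half_set ('Z_3 * ('Z_3 * 'Z_3))%type.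
Proof.
pose s : seq ('Z_3 * ('Z_3 * 'Z_3)) := [:: (0, (0, 1)); (0, (1, 0)); (0, (1, 1));
  (0, (1, 2)); (1, (0, 0)); (1, (0, 1)); (2, (0, 1)); (1, (1, 0)); (1, (1, 1));
  (2, (2, 1)); (1, (2, 0)); (2, (1, 2)); (1, (2, 2))].
exists [set x in s]; split.
  by apply: half_set_seq => // -[[[|[|[|?]]] ?] [[[|[|[|?]]] ?] [[|[|[|?]]] ?]]]; vm_compute.
by rewrite sum_set_seq; [apply/eqP; rewrite unlock; vm_compute | vm_compute].
Qed.

Lemma Z5_square_zero_sum_half_set : has_zero_sum_half_set ('Z_5 * 'Z_5)%type.
Proof.
pose s : seq ('Z_5 * 'Z_5) := [:: (0, 1); (0, 2); (1, 0); (1, 1); (1, 2); (1, 3);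
  (4, 1); (2, 0); (2, 1); (3, 3); (3, 2); (2, 4)].
exists [set x in s]; split.
  by apply: half_set_seq => // -[[[|[|[|[|[|?]]]]] ?] [[|[|[|[|[|?]]]]] ?]]; vm_compute.
by rewrite sum_set_seq; [apply/eqP; rewrite unlock; vm_compute | vm_compute].
Qed.

Lemma exponent3_zero_sum_half_set (G : finZmodType) (g : G) :
  (forall x : G, x *+ 3 = 0) -> g != 0 ->
  ~ zmod_iso G 'Z_3 -> ~ zmod_iso G ('Z_3 * 'Z_3)%type ->
  has_zero_sum_half_set G.
Proof.
move=> expG g0 nZ3 nZ3sq; have pr3 : prime 3 by [].
have [//|[f2 [f2_inj f2D]]] := embedding_iso_or_extend pr3 expG
  (mulrn_ord_inj pr3 expG g0) (mulrn_ord_morph expG g).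
have [//|[f3 [f3_inj f3D]]] := embedding_iso_or_extend pr3 expG f2_inj f2D.
apply: (embedding_zero_sum_half_set f3_inj f3D _ Z3_cube_zero_sum_half_set) => x.
by rewrite !card_prod !card_ord (mulrnA x 3 9) expG mul0rn.
Qed.

Lemma exponent5_zero_sum_half_set (G : finZmodType) (g : G) :
  (forall x : G, x *+ 5 = 0) -> g != 0 -> ~ zmod_iso G 'Z_5 ->
  has_zero_sum_half_set G.
Proof.
move=> expG g0 nZ5; have pr5 : prime 5 by [].
have [//|[f2 [f2_inj f2D]]] := embedding_iso_or_extend pr5 expG
  (mulrn_ord_inj pr5 expG g0) (mulrn_ord_morph expG g).
apply: (embedding_zero_sum_half_set f2_inj f2D _ Z5_square_zero_sum_half_set) => x.
by rewrite !card_prod !card_ord mulrnA expG.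
Qed.

Lemma large_exponent_zero_sum_half_set (G : finZmodType) (g : G) k :
  #[g]%g = (2 * k + 1)%N -> (2 < k)%N -> (forall x : G, x *+ #[g]%g = 0) ->
  has_zero_sum_half_set G.
Proof.
move=> g_ord k2 expG; have [T [hT sumT]] := cyclic_zero_sum_half_set g_ord k2.
apply: (extend_zero_sum_half_set _ _ _ _ hT sumT).
- exact: group1.
- by move=> x y xg yg; rewrite -zmodVgE -zmodMgE groupM ?groupV.
- by rewrite -[#|_|]/#[g]%g g_ord addn1 /= mul2n odd_double.
- exact: expG.
Qed.

Lemma nonexceptional_zero_sum_half_set (G : finZmodType) : odd #|G| -> (3 <= #|G|)%N ->
  ~ [\/ zmod_iso G 'Z_3, zmod_iso G 'Z_5 | zmod_iso G ('Z_3 * 'Z_3)%type] ->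
  has_zero_sum_half_set G.
Proof.
move=> oddG G3 not_exc.
have [g _ exp_g] := exponent_witness (abelian_nil (zmod_abelian [set: G])).
have expG (x : G) : x *+ #[g]%g = 0 by rewrite -exp_g -zmodXgE expg_exponent ?inE.
have g_nt : #[g]%g != 1%N.
  apply: contraTneq G3 => g1; rewrite -ltnNge ltnS (@leq_trans 1) //.
  by apply/fintype_le1P => x y; have := expG y; have := expG x; rewrite g1 !mulr1n => -> ->.
have g0 : g != 0 by apply: contraNneq g_nt => ->; rewrite -zmod1gE order1.
have odd_g : odd #[g]%g by apply: dvdn_odd oddG; rewrite -cardsT order_dvdG ?inE.
have g_ord : #[g]%g = (2 * (#[g]%g)./2 + 1)%N.
  by rewrite -[LHS]odd_double_half odd_g addnC mul2n.
move: (#[g]%g)./2 g_ord => k g_ord; rewrite g_ord in expG g_nt.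
case: k g_ord expG g_nt => [|[|[|k]]] g_ord expG g_nt //.
- by apply: (exponent3_zero_sum_half_set expG g0) => iso; apply: not_exc; constructor.
- by apply: (exponent5_zero_sum_half_set expG g0) => iso; apply: not_exc; constructor.
- by apply: (large_exponent_zero_sum_half_set g_ord) => //; rewrite g_ord.
Qed.

Theorem mainTheorem17 (G : finZmodType) (n : nat) :
  #|G| = (2 * n + 1)%N -> (3 <= #|G|)%N ->
  (exists A : 'M[option G]_(2, n),
      zs_magic_pfa G [set x : G | x != 0] 2 n n 2 A)
  <-> ~ [\/ zmod_iso G 'Z_3, zmod_iso G 'Z_5 | zmod_iso G ('Z_3 * 'Z_3)%type].
Proof.
move=> cardG G3; split.
- move=> [A /half_set_of_magic_array zsG].
  case=> [[f [/bij_eq_card cardGK _]]|[f [/bij_eq_card cardGK _]]|iso].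
  + by apply: (card3_no_zero_sum_half_set _ zsG); rewrite cardGK card_ord.
  + by apply: (card5_no_zero_sum_half_set _ zsG); rewrite cardGK card_ord.
  + exact: Z3xZ3_no_zero_sum_half_set (iso_zero_sum_half_set iso zsG).
- move=> not_exc; have oddG : odd #|G| by rewrite cardG addn1 /= mul2n odd_double.
  have [S [hS sumS]] := nonexceptional_zero_sum_half_set oddG G3 not_exc.
  have -> : n = #|S| by have := card_half_set hS; rewrite cardG; lia.
  exact: magic_array_of_half_set.
Qed.
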